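(* The group $\mathrm{H}$ is a normal subgroup of $\Gamma^6_2$.
   Context: Let $\langle x,y\rangle=x_1y_1+\dots+x_6y_6-x_7y_7$ on $\mathbb{R}^7$, $H^6=\{x:\langle x,x\rangle=-1,x_7>0\}$, and $e_1,\dots,e_7$ the standard basis. $\Gamma^6=PO_{6,1}\mathbb{Z}$ is the group of $7\times7$ integer matrices preserving $\langle\cdot,\cdot\rangle$ and mapping $H^6$ to itself; $\Gamma^6_2$ is its subgroup of matrices congruent to the identity modulo $2$. $\mathrm{K}^6$ is the group of the $64$ matrices $\mathrm{diag}(\varepsilon_1,\dots,\varepsilon_6,1)$, $\varepsilon_i=\pm1$. Define vectors $u_1,\dots,u_{27}$: $u_i=-e_i$ for $1\le i\le 6$; $u_7,\dots,u_{21}$ are $e_a+e_b+e_7$ for the pairs $(a,b)=(1,2),(1,3),(2,3),(1,4),(2,4),(3,4),(1,5),(2,5),(3,5),(4,5),(1,6),(2,6),(3,6),(4,6),(5,6)$ in this order; $u_{22},\dots,u_{27}$ are $\sum_{i=1}^6e_i-e_c+2e_7$ for $c=6,5,4,3,2,1$ in this order. Let $P^6=\{x\in H^6:\langle x,u_j\rangle\le0,\ 1\le j\le27\}$ (a right-angled polytope whose $27$ sides lie in the hyperplanes $u_j^\perp$) and let $R_j$ be the reflection $x\mapsto x-2\langle x,u_j\rangle u_j$ in the $j$th side. For $7\le j\le27$ let $k_j\in\mathrm{K}^6$ be the matrix with $\varepsilon_i=-1$ exactly for $i\in N_j$, where $N_7=\{2,3,5\}$, $N_8=\{1,2,3,4,5\}$,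 $N_9=\{3,4,5\}$, $N_{10}=\{1,2,3,5,6\}$, $N_{11}=\{1,4,6\}$, $N_{12}=\{2,3,5\}$, $N_{13}=\{3,4,5\}$, $N_{14}=\{1,2,5\}$, $N_{15}=\{5\}$, $N_{16}=\{2,4,6\}$, $N_{17}=\{1,2,5\}$, $N_{18}=\{2,4,6\}$, $N_{19}=\{6\}$, $N_{20}=\{1,3,4\}$, $N_{21}=\{1,2,3,5,6\}$, $N_{22}=\{1,3,4\}$, $N_{23}=\{2\}$, $N_{24}=\{1,4,6\}$, $N_{25}=\{1,2,3,4,5\}$, $N_{26}=\{4\}$, $N_{27}=\{3\}$. Let $\mathrm{H}$ be the subgroup of $\Gamma^6$ generated by all matrices $\ell R_j\ell k_j$ with $\ell\in\mathrm{K}^6$ and $7\le j\le 27$ (these are the side-pairing transformations of a side-pairing of the polytope $Q^6=\bigcup_{\ell\in\mathrm{K}^6}\ell P^6$). *)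

(* Matrices act on column vectors: x |-> M *m x. *)
From HB Require Import structures.
From mathcomp Require Import all_boot all_order all_algebra.
From mathcomp Require Import reals.
Set Implicit Arguments. Unset Strict Implicit. Unset Printing Implicit Defensive.
Import Order.TTheory GRing.Theory Num.Theory.
Local Open Scope ring_scope.

(* Gram matrix J = diag(1,1,1,1,1,1,-1) of <x,y> = x1y1+...+x6y6 - x7y7
   (coordinates are 1-based in the paper: coordinate k is ordinal k-1) *)
Definition Jmat (R : pzRingType) : 'M[R]_7 :=
  diag_mx (\row_(i < 7) if (i : nat) == 6%N then -1 else 1).

Definition lform (R : pzRingType) (x y : 'cV[R]_7) : R :=
  (x^T *m Jmat R *m y) 0 0.

Definition inH6 (R : realType) (x : 'cV[R]_7) : Prop :=
  lform x x = -1 /\ 0 < x (inord 6) 0.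

(* standard basis vector e_k, k 1-based *)
Definition evec (k : nat) : 'cV[int]_7 := \col_(i < 7) ((i.+1 == k)%:Z).

Definition inGamma6 (R : realType) (M : 'M[int]_7) : Prop :=
  M^T *m Jmat int *m M = Jmat int /\
  forall x : 'cV[R]_7, inH6 x -> inH6 (map_mx intr M *m x).

Definition inGamma6_2 (R : realType) (M : 'M[int]_7) : Prop :=
  inGamma6 R M /\ forall i j : 'I_7, (2 %| M i j - (i == j)%:Z)%Z.

Definition pairs : seq (nat * nat) :=
  [:: (1,2); (1,3); (2,3); (1,4); (2,4); (3,4); (1,5); (2,5); (3,5); (4,5);
      (1,6); (2,6); (3,6); (4,6); (5,6)]%N.

Definition uvec (j : nat) : 'cV[int]_7 :=
  if (1 <= j <= 6)%N then - evec j
  else if (7 <= j <= 21)%N then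
    let ab := nth (0,0)%N pairs (j - 7) in evec ab.1 + evec ab.2 + evec 7
  else if (22 <= j <= 27)%N then
    let c := (28 - j)%N in
    \sum_(1 <= i < 7) evec i - evec c + 2%:Z *: evec 7
  else 0.

Definition Rmat (j : nat) : 'M[int]_7 :=
  1%:M - 2%:Z *: (uvec j *m (uvec j)^T *m Jmat int).

(* sign-diagonal matrix diag(eps_1,...,eps_7) with eps_k = -1 iff neg k (k 1-based) *)
Definition signdiag (neg : pred nat) : 'M[int]_7 :=
  diag_mx (\row_(i < 7) if neg i.+1 then -1 else 1).

Definition inK6 (M : 'M[int]_7) : Prop :=
  exists S : {set 'I_6}, M = signdiag (fun k => [exists a in S, a.+1 == k]).

Definition Nset (j : nat) : seq nat :=
  nth [::] [:: [:: 2; 3; 5]; [:: 1; 2; 3; 4; 5]; [:: 3; 4; 5]; [:: 1; 2; 3; 5; 6];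
    [:: 1; 4; 6]; [:: 2; 3; 5]; [:: 3; 4; 5]; [:: 1; 2; 5]; [:: 5]; [:: 2; 4; 6];
    [:: 1; 2; 5]; [:: 2; 4; 6]; [:: 6]; [:: 1; 3; 4]; [:: 1; 2; 3; 5; 6];
    [:: 1; 3; 4]; [:: 2]; [:: 1; 4; 6]; [:: 1; 2; 3; 4; 5]; [:: 4]; [:: 3]]%N
    (j - 7).

Definition kmat (j : nat) : 'M[int]_7 := signdiag (fun k => k \in Nset j).

Definition Hgen (M : 'M[int]_7) : Prop :=
  exists j : nat, (7 <= j <= 27)%N /\
    exists l : 'M[int]_7, inK6 l /\ M = l *m Rmat j *m l *m kmat j.

Inductive inH : 'M[int]_7 -> Prop :=
  | inH_gen M : Hgen M -> inH M
  | inH_one : inH 1%:M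
  | inH_mul M N : inH M -> inH N -> inH (M *m N)
  | inH_inv M : inH M -> inH (invmx M).

Definition normal_in (G H : 'M[int]_7 -> Prop) : Prop :=
  (forall M, H M -> G M) /\
  (forall g M, G g -> H M -> H (g *m M *m invmx g)).

From mathcomp Require Import all_boot all_order all_algebra reals.
From mathcomp Require Import ring lra zify.
Set Implicit Arguments. Unset Strict Implicit. Unset Printing Implicit Defensive.
Import Order.TTheory GRing.Theory Num.Theory.
Local Open Scope ring_scope.

(** Both kinds of generators of [Gamma^6_2 = <K^6, R_7, ..., R_27>] normalise H.
    Generation is a descent on the corner entry [g_77]: after a sign change in K^6 making
    the first six coordinates of [g e7] nonnegative, either [g e7] lies strictly beyond
    some side [u_j^perp] (7 <= j <= 27) of P^6, and then [R_j g] has a smaller corner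
    entry, or [g e7] lies in P^6, where an integrality argument forces [g e7 = e7] and
    hence [g \in K^6]. Conjugation by [m \in K^6] sends the generator [l R_j l k_j] of H
    to [(m l) R_j (m l) k_j], because K^6 is an elementary abelian 2-group, and
    [R_j = (R_j k_j) k_j] with [R_j k_j] a generator of H. *)

Notation ord7 k := (@inord 6 k).

Lemma ord7_eq i j : (i < 7)%N -> (j < 7)%N -> (ord7 i == ord7 j) = (i == j).
Proof. by move=> hi hj; rewrite -(inj_eq val_inj) /= !inordK. Qed.

Lemma sum_ord7 (R : nmodType) (F : 'I_7 -> R) : \sum_(i < 7) F i =
  F (ord7 0) + F (ord7 1) + F (ord7 2) + F (ord7 3) + F (ord7 4) + F (ord7 5) + F (ord7 6).
Proof.
transitivity (\sum_(0 <= k < 7) F (ord7 k)).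
  by rewrite big_mkord; apply: eq_bigr => i _; rewrite inord_val.
by rewrite /index_iota /= !big_cons big_nil addr0 !addrA.
Qed.

Lemma sum_ord6 (R : nmodType) (F : 'I_6 -> R) : \sum_(i < 6) F i =
  F (inord 0) + F (inord 1) + F (inord 2) + F (inord 3) + F (inord 4) + F (inord 5).
Proof.
transitivity (\sum_(0 <= k < 6) F (inord k)).
  by rewrite big_mkord; apply: eq_bigr => i _; rewrite inord_val.
by rewrite /index_iota /= !big_cons big_nil addr0 !addrA.
Qed.

(** * The Lorentz form *)

Lemma lformE (R : pzRingType) (x y : 'cV[R]_7) : lform x y =
  x (ord7 0) 0 * y (ord7 0) 0 + x (ord7 1) 0 * y (ord7 1) 0 + x (ord7 2) 0 * y (ord7 2) 0
  + x (ord7 3) 0 * y (ord7 3) 0 + x (ord7 4) 0 * y (ord7 4) 0 + x (ord7 5) 0 * y (ord7 5) 0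
  - x (ord7 6) 0 * y (ord7 6) 0.
Proof.
by rewrite /lform /Jmat mul_mx_diag !mxE sum_ord7 !mxE !inordK //= !mulr1 mulrN1 mulNr.
Qed.

Lemma lformC (R : comPzRingType) (x y : 'cV[R]_7) : lform x y = lform y x.
Proof. by rewrite !lformE; ring. Qed.

Lemma lform_isometry (R : comPzRingType) (M : 'M[R]_7) x y :
  M^T *m Jmat R *m M = Jmat R -> lform (M *m x) (M *m y) = lform x y.
Proof. by move=> h; rewrite /lform trmx_mul !mulmxA -(mulmxA _ M^T) -(mulmxA _ _ M) h. Qed.

Lemma JmatE (R : pzRingType) a b : (a < 7)%N -> (b < 7)%N ->
  Jmat R (ord7 a) (ord7 b) = if a == b then (if a == 6%N then -1 else 1) else 0.
Proof. by move=> ha hb; rewrite /Jmat !mxE ord7_eq // !inordK //; case: (a == b). Qed.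

Lemma Jmat_sq (R : pzRingType) : Jmat R *m Jmat R = 1%:M.
Proof.
rewrite /Jmat mulmx_diag; apply/matrixP => i j; rewrite !mxE.
by case: (i == j); case: ifP => _; rewrite ?mulrNN ?mulr1 ?mulr1n ?mulr0n.
Qed.

Lemma tr_Jmat (R : pzRingType) : (Jmat R)^T = Jmat R.
Proof. exact: tr_diag_mx. Qed.

Lemma map_Jmat (R : realType) : map_mx intr (Jmat int) = Jmat R.
Proof.
apply/matrixP => i j; rewrite !mxE; case: (i == j); rewrite ?mulr1n ?mulr0n //.
by case: ifP.
Qed.

Definition e7 (R : pzRingType) : 'cV[R]_7 := \col_i (if i == ord7 6 then 1 else 0).

Lemma e7E (R : pzRingType) i : e7 R i 0 = if i == ord7 6 then 1 else 0.
Proof. by rewrite mxE. Qed.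

Lemma lform_e7l (R : pzRingType) (y : 'cV[R]_7) : lform (e7 R) y = - y (ord7 6) 0.
Proof. by rewrite lformE !e7E !ord7_eq //= !mul0r !add0r mul1r. Qed.

Lemma lform_e7 (R : pzRingType) : lform (e7 R) (e7 R) = -1.
Proof. by rewrite lform_e7l e7E eqxx. Qed.

Lemma mulmx_e7 (R : pzRingType) (M : 'M[R]_7) i : (M *m e7 R) i 0 = M i (ord7 6).
Proof.
rewrite !mxE (bigD1 (ord7 6)) //= mxE eqxx mulr1 big1 ?addr0 // => k /negPf hk.
by rewrite mxE hk mulr0.
Qed.

Lemma lorentz_unit (R : comUnitRingType) (a : 'M[R]_7) :
  a^T *m Jmat R *m a = Jmat R -> a \in unitmx.
Proof.
move=> h; suff /mulmx1_unit[] : (Jmat R *m a^T *m Jmat R) *m a = 1%:M by [].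
by rewrite -!mulmxA (mulmxA a^T) h Jmat_sq.
Qed.

Lemma invmx_of_left (R : comUnitRingType) n (A B : 'M[R]_n) : B *m A = 1%:M -> invmx A = B.
Proof.
move=> h; have [uB uA] := mulmx1_unit h.
by rewrite -[invmx A]mul1mx -h -mulmxA mulmxV // mulmx1.
Qed.

Lemma lorentz_invmx (R : comUnitRingType) (a : 'M[R]_7) :
  a^T *m Jmat R *m a = Jmat R -> invmx a = Jmat R *m a^T *m Jmat R.
Proof. by move=> h; apply: invmx_of_left; rewrite -!mulmxA (mulmxA a^T) h Jmat_sq. Qed.

Lemma cauchy_schwarz6 (F : comPzRingType) (x0 x1 x2 x3 x4 x5 y0 y1 y2 y3 y4 y5 : F) :
  (x0*x0 + x1*x1 + x2*x2 + x3*x3 + x4*x4 + x5*x5) * (y0*y0 + y1*y1 + y2*y2 + y3*y3 + y4*y4 + y5*y5)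
  - (x0*y0 + x1*y1 + x2*y2 + x3*y3 + x4*y4 + x5*y5) ^+ 2
  = (x0*y1-x1*y0)^+2 + (x0*y2-x2*y0)^+2 + (x0*y3-x3*y0)^+2 + (x0*y4-x4*y0)^+2 + (x0*y5-x5*y0)^+2
  + (x1*y2-x2*y1)^+2 + (x1*y3-x3*y1)^+2 + (x1*y4-x4*y1)^+2 + (x1*y5-x5*y1)^+2
  + (x2*y3-x3*y2)^+2 + (x2*y4-x4*y2)^+2 + (x2*y5-x5*y2)^+2
  + (x3*y4-x4*y3)^+2 + (x3*y5-x5*y3)^+2 + (x4*y5-x5*y4)^+2.
Proof. ring. Qed.

(** Reversed Cauchy--Schwarz: [P] is the spatial part of [<x, y>], [s] and [t] the
    time coordinates of [x] and [y]. *)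
Lemma future_cone_scalar (F : realDomainType) (X Y P s t : F) :
  0 <= X -> 0 <= Y -> P ^+ 2 <= X * Y -> X - s * s = -1 -> Y - t * t = -1 ->
  0 < s -> P - s * t < 0 -> 0 < t.
Proof.
move=> X0 Y0 hP hX hY s0 hneg; rewrite ltNge; apply/negP => t0.
have st0 : s * t <= 0 by rewrite pmulr_rle0.
have : (s * t) ^+ 2 < P ^+ 2.
  rewrite -sqrrN -(sqrrN P) !expr2; apply: ltr_pM; lra.
have -> : (s * t) ^+ 2 = (X + 1) * (Y + 1) by rewrite exprMn !expr2; congr (_ * _); lra.
nra.
Qed.

Lemma future_cone (F : realDomainType) (x y : 'cV[F]_7) :
  lform x x = -1 -> lform y y = -1 -> 0 < x (ord7 6) 0 -> lform x y < 0 -> 0 < y (ord7 6) 0.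
Proof.
rewrite !lformE => hx hy hx6; apply: future_cone_scalar hx hy hx6.
- by do 5! (apply: addr_ge0; last by rewrite -expr2 sqr_ge0); rewrite -expr2 sqr_ge0.
- by do 5! (apply: addr_ge0; last by rewrite -expr2 sqr_ge0); rewrite -expr2 sqr_ge0.
- rewrite -subr_ge0 cauchy_schwarz6.
  by do 14! (apply: addr_ge0; last exact: sqr_ge0); exact: sqr_ge0.
Qed.

(** * The congruence subgroup, over the integers *)

Notation J := (Jmat int).

Lemma J_sq : J *m J = 1%:M.
Proof. exact: Jmat_sq. Qed.

(** By [Gamma2P], preserving the upper sheet H^6 amounts to a positive corner entry. *)
Definition Gamma2 (g : 'M[int]_7) : Prop :=
  [/\ g^T *m J *m g = J, 0 < g (ord7 6) (ord7 6) & exists A, g = 1%:M + 2%:Z *: A].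

Lemma Gamma2_future g : Gamma2 g ->
  lform (g *m e7 int) (g *m e7 int) = -1 /\ 0 < (g *m e7 int) (ord7 6) 0.
Proof. by case=> hf hp _; rewrite lform_isometry // lform_e7 mulmx_e7. Qed.

Lemma Gamma2_mul a b : Gamma2 a -> Gamma2 b -> Gamma2 (a *m b).
Proof.
move=> ha hb; have [fa pa [A eA]] := ha; have [fb pb [B eB]] := hb; split.
- by rewrite trmx_mul !mulmxA -(mulmxA _ a^T) -(mulmxA _ _ a) fa.
- have [a1 a2] := Gamma2_future ha; have [b1 b2] := Gamma2_future hb.
  rewrite -mulmx_e7 -mulmxA; apply: (future_cone a1) a2 _; rewrite lform_isometry //.
  by rewrite lform_e7l oppr_lt0.
- exists (A + B + 2%:Z *: (A *m B)); rewrite eA eB mulmxDl !mulmxDr mul1mx mulmx1.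
  rewrite -!scalemxAl -!scalemxAr scalerA !scalerDr scalerA mul1mx.
  by rewrite -!addrA; congr (_ + _); rewrite addrCA.
Qed.

Lemma Gamma2V a : Gamma2 a -> Gamma2 (invmx a).
Proof.
move=> ha; have [fa pa [A eA]] := ha; rewrite lorentz_invmx //.
have fa' : a *m J *m a^T = J.
  have aV : a *m (J *m a^T *m J) = 1%:M by rewrite -lorentz_invmx // mulmxV ?lorentz_unit.
  rewrite -[LHS]mulmx1 -J_sq.
  have -> : a *m J *m a^T *m (J *m J) = a *m (J *m a^T *m J) *m J by rewrite !mulmxA.
  by rewrite aV mul1mx.
split.
- have -> : (J *m a^T *m J)^T = J *m a *m J by rewrite !trmx_mul trmxK tr_Jmat mulmxA.
  have -> : J *m a *m J *m J *m (J *m a^T *m J) = J *m (a *m J *m a^T) *m (J *m J) *m J.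
    by rewrite J_sq mulmx1 !mulmxA -(mulmxA _ J J) J_sq mulmx1.
  by rewrite fa' J_sq !mul1mx.
- by rewrite /Jmat mul_mx_diag mul_diag_mx !mxE inordK //= mulN1r mulrN1 opprK.
- exists (J *m A^T *m J); rewrite eA raddfD /= linearZ /= trmx1 mulmxDr mulmxDl mulmx1.
  by rewrite J_sq -scalemxAr -scalemxAl.
Qed.

Lemma Gamma2_unit a : Gamma2 a -> a \in unitmx.
Proof. by case=> /lorentz_unit. Qed.

Lemma map_lorentz (R : realType) (g : 'M[int]_7) : g^T *m J *m g = J ->
  (map_mx intr g : 'M[R]_7)^T *m Jmat R *m map_mx intr g = Jmat R.
Proof. by move=> h; rewrite -map_Jmat map_trmx -!map_mxM h. Qed.

Lemma Gamma2P (R : realType) g : inGamma6_2 R g <-> Gamma2 g.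
Proof.
have nat_int (b : bool) : (b%:R : int) = b%:Z by case: b.
split.
- case=> [[hf hH] hd]; split=> //.
  + have h7 : inH6 (e7 R) by split; [exact: lform_e7 | rewrite e7E eqxx ltr01].
    by have [_] := hH _ h7; rewrite mulmx_e7 mxE ltr0z.
  + exists (\matrix_(i, j) ((g i j - (i == j)%:Z) %/ 2)%Z).
    apply/matrixP => i j; rewrite !mxE mulrC divzK // nat_int.
    by rewrite addrC subrK.
- case=> hf hp [A eA]; split; [split=> // x [hx1 hx2]; split|].
  + by rewrite lform_isometry ?map_lorentz.
  + apply: (@future_cone R (map_mx intr g *m e7 R)).
    * by rewrite lform_isometry ?map_lorentz // lform_e7.
    * by rewrite lform_isometry ?map_lorentz.
    * by rewrite mulmx_e7 mxE ltr0z.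
    * by rewrite lform_isometry ?map_lorentz // lform_e7l oppr_lt0.
  + move=> i j; rewrite eA !mxE nat_int addrC addrK.
    by apply: dvdz_mulr; rewrite dvdzz.
Qed.

(** * Sign matrices and the group K^6 *)

Lemma signdiagE p (i j : 'I_7) : signdiag p i j = (if p i.+1 then -1 else 1) *+ (i == j).
Proof. by rewrite !mxE. Qed.

Lemma eq_signdiag p q : (forall i : 'I_7, p i.+1 = q i.+1) -> signdiag p = signdiag q.
Proof. by move=> h; apply/matrixP => i j; rewrite !signdiagE h. Qed.

Lemma signdiag_mul p q : signdiag p *m signdiag q = signdiag (fun k => p k (+) q k).
Proof.
rewrite /signdiag mulmx_diag; congr diag_mx; apply/rowP => i; rewrite !mxE.
by case: (p i.+1); case: (q i.+1); rewrite ?mulrNN ?mulr1 ?mulN1r ?mul1r.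
Qed.

Lemma signdiag0 : signdiag (fun _ => false) = 1%:M.
Proof. by apply/matrixP => i j; rewrite !mxE. Qed.

Lemma signdiag_sq p : signdiag p *m signdiag p = 1%:M.
Proof. by rewrite signdiag_mul -signdiag0; apply: eq_signdiag => i; rewrite addbb. Qed.

Lemma signdiagC p q : signdiag p *m signdiag q = signdiag q *m signdiag p.
Proof. by rewrite !signdiag_mul; apply: eq_signdiag => i; rewrite addbC. Qed.

Lemma Gamma2_signdiag p : p 7%N = false -> Gamma2 (signdiag p).
Proof.
move=> p7; split.
- rewrite tr_diag_mx /Jmat /signdiag !mulmx_diag; congr diag_mx; apply/rowP => i.
  by rewrite !mxE; case: (p i.+1); case: ifP; rewrite ?mulrNN ?mulr1 ?mulN1r ?mul1r ?mulrN1.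
- by rewrite signdiagE inordK //= p7 eqxx.
- exists (diag_mx (\row_i (if p i.+1 then -1 else 0))); apply/matrixP => i j.
  rewrite !mxE; case: (i == j); rewrite ?mulr1n ?mulr0n ?addr0 //.
  by case: (p i.+1).
Qed.

Definition K6pred (S : {set 'I_6}) (k : nat) : bool := [exists a in S, a.+1 == k].

Lemma K6pred7 S : K6pred S 7%N = false.
Proof. by apply/existsP => -[a /andP [_ /eqP h]]; have := ltn_ord a; rewrite h. Qed.

Lemma inK6P M : inK6 M -> exists2 p, M = signdiag p & p 7%N = false.
Proof. by case=> S ->; exists (K6pred S) => //; exact: K6pred7. Qed.

Lemma inK6_signdiag (p : pred nat) : p 7%N = false -> inK6 (signdiag p).
Proof.
move=> p7; exists [set a : 'I_6 | p a.+1]; apply: eq_signdiag => i.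
apply/esym/existsP; case: ifP => hp.
- have hi : (i < 6)%N.
    rewrite ltnNge; apply/negP => i6; move: hp.
    have -> : i.+1 = 7%N by have := ltn_ord i; lia.
    by rewrite p7.
  by exists (Ordinal hi); rewrite inE /= hp eqxx.
- by case=> a /andP [ha /eqP e]; move: ha; rewrite inE e hp.
Qed.

Lemma inK6_1 : inK6 1%:M.
Proof. by rewrite -signdiag0; apply: inK6_signdiag. Qed.

Lemma inK6_mul a b : inK6 a -> inK6 b -> inK6 (a *m b).
Proof.
move=> /inK6P [p -> p7] /inK6P [q -> q7].
by rewrite signdiag_mul; apply: inK6_signdiag; rewrite p7 q7.
Qed.

Lemma inK6_sq a : inK6 a -> a *m a = 1%:M.
Proof. by move=> /inK6P [p -> _]; exact: signdiag_sq. Qed.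

Lemma inK6C a b : inK6 a -> inK6 b -> a *m b = b *m a.
Proof. by move=> /inK6P [p -> _] /inK6P [q -> _]; exact: signdiagC. Qed.

Lemma inK6_Gamma2 a : inK6 a -> Gamma2 a.
Proof. by move=> /inK6P [p -> p7]; exact: Gamma2_signdiag. Qed.

Lemma inK6_kmat j : inK6 (kmat j).
Proof.
apply: inK6_signdiag; rewrite /Nset; move: (j - 7)%N => n.
by do 21! (case: n => [//|n]); rewrite nth_default.
Qed.

(** * The roots u_7, ..., u_27 and their reflections *)

(** Row [j - 7] lists the coordinates of [uvec j]. *)
Definition uvec_table : seq (seq int) :=
  [:: [:: 1; 1; 0; 0; 0; 0; 1]; [:: 1; 0; 1; 0; 0; 0; 1]; [:: 0; 1; 1; 0; 0; 0; 1];
      [:: 1; 0; 0; 1; 0; 0; 1]; [:: 0; 1; 0; 1; 0; 0; 1]; [:: 0; 0; 1; 1; 0; 0; 1];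
      [:: 1; 0; 0; 0; 1; 0; 1]; [:: 0; 1; 0; 0; 1; 0; 1]; [:: 0; 0; 1; 0; 1; 0; 1];
      [:: 0; 0; 0; 1; 1; 0; 1]; [:: 1; 0; 0; 0; 0; 1; 1]; [:: 0; 1; 0; 0; 0; 1; 1];
      [:: 0; 0; 1; 0; 0; 1; 1]; [:: 0; 0; 0; 1; 0; 1; 1]; [:: 0; 0; 0; 0; 1; 1; 1];
      [:: 1; 1; 1; 1; 1; 0; 2]; [:: 1; 1; 1; 1; 0; 1; 2]; [:: 1; 1; 1; 0; 1; 1; 2];
      [:: 1; 1; 0; 1; 1; 1; 2]; [:: 1; 0; 1; 1; 1; 1; 2]; [:: 0; 1; 1; 1; 1; 1; 2]].

Definition ucoord (j i : nat) : int := nth 0 (nth [::] uvec_table (j - 7)) i.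

Lemma root_indexP j : (7 <= j <= 27)%N -> exists2 n, (n < 21)%N & j = (n + 7)%N.
Proof. by case/andP => j7 j27; exists (j - 7)%N; lia. Qed.

Lemma uvecE j (i : 'I_7) : (7 <= j <= 27)%N -> uvec j i 0 = ucoord j i.
Proof.
case/root_indexP => n hn ->; case: i => [i Hi].
rewrite /uvec /ucoord addnK.
do 21! (case: n hn => [|n] hn /=;
  [rewrite !mxE ?summxE /index_iota /= ?big_cons ?big_nil ?mxE;
   by do 7! (case: i Hi => [|i] Hi //)|]).
by [].
Qed.

Lemma lform_uvec (y : 'cV[int]_7) j : (7 <= j <= 27)%N -> lform y (uvec j) =
  y (ord7 0) 0 * ucoord j 0 + y (ord7 1) 0 * ucoord j 1 + y (ord7 2) 0 * ucoord j 2
  + y (ord7 3) 0 * ucoord j 3 + y (ord7 4) 0 * ucoord j 4 + y (ord7 5) 0 * ucoord j 5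
  - y (ord7 6) 0 * ucoord j 6.
Proof. by move=> hj; rewrite lformE !uvecE // !inordK. Qed.

Lemma uvec_unit j : (7 <= j <= 27)%N -> lform (uvec j) (uvec j) = 1.
Proof.
move=> hj; rewrite lformE !uvecE // !inordK //.
case/root_indexP: hj => n hn ->; rewrite /ucoord addnK.
by do 21! (case: n hn => [|n] hn; [by []|]).
Qed.

Lemma ucoord6_gt0 j : (7 <= j <= 27)%N -> 0 < ucoord j 6.
Proof.
case/root_indexP => n hn ->; rewrite /ucoord addnK.
by do 21! (case: n hn => [|n] hn; [by []|]).
Qed.

Section Reflection.
Variable u : 'cV[int]_7.
Hypothesis u_unit : u^T *m J *m u = 1%:M.
Let P := u *m u^T *m J.
Let Ru := 1%:M - 2%:Z *: P.

Lemma reflection_proj : P *m P = P.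
Proof.
have -> : P *m P = u *m (u^T *m J *m u) *m u^T *m J by rewrite /P !mulmxA.
by rewrite u_unit mulmx1.
Qed.

Lemma reflection_sq : Ru *m Ru = 1%:M.
Proof.
rewrite /Ru mulmxBl !mulmxBr !mul1mx mulmx1 -!scalemxAl -!scalemxAr reflection_proj scalerA.
by rewrite -scalerBl (_ : 2%:Z - 2%:Z * 2%:Z = - 2%:Z) // scaleNr opprK subrK.
Qed.

Lemma reflection_Gamma2 : Gamma2 Ru.
Proof.
have trRJ : Ru^T *m J = J *m Ru.
  rewrite /Ru /P raddfB /= linearZ /= trmx1 !trmx_mul trmxK tr_Jmat.
  rewrite mulmxBl mulmxBr mul1mx mulmx1 -!scalemxAl -!scalemxAr; congr (_ - _ *: _).
  by rewrite !mulmxA.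
split.
- by rewrite trRJ -mulmxA reflection_sq mulmx1.
- rewrite /Ru /P /Jmat mul_mx_diag !mxE big_ord1 !mxE inordK //= eqxx mulrN1 mulrN opprK.
  by rewrite mulr1n; set x := u _ _; have := sqr_ge0 x; rewrite expr2; lia.
- by exists (- P); rewrite /Ru scalerN.
Qed.

End Reflection.

Lemma uvec_unit_mx j : (7 <= j <= 27)%N -> (uvec j)^T *m J *m uvec j = 1%:M.
Proof.
move=> hj; apply/matrixP => a b; rewrite !ord1.
by have := uvec_unit hj; rewrite /lform => ->; rewrite mxE.
Qed.

Lemma Rmat_sq j : (7 <= j <= 27)%N -> Rmat j *m Rmat j = 1%:M.
Proof. by move=> hj; apply: reflection_sq; exact: uvec_unit_mx. Qed.

Lemma Gamma2_Rmat j : (7 <= j <= 27)%N -> Gamma2 (Rmat j).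
Proof. by move=> hj; apply: reflection_Gamma2; exact: uvec_unit_mx. Qed.

Lemma Rmat_vec j (y : 'cV[int]_7) : Rmat j *m y = y - (2%:Z * lform (uvec j) y) *: uvec j.
Proof.
rewrite /Rmat mulmxBl mul1mx -scalemxAl -!mulmxA.
have -> : (uvec j)^T *m (J *m y) = (lform (uvec j) y)%:M.
  by apply/matrixP => a b; rewrite !ord1 /lform -mulmxA [RHS]mxE eqxx mulr1n.
by rewrite mul_mx_scalar scalerA.
Qed.

Lemma Rmat_corner (g : 'M[int]_7) j : (7 <= j <= 27)%N ->
  (Rmat j *m g) (ord7 6) (ord7 6) =
  g (ord7 6) (ord7 6) - 2 * lform (g *m e7 int) (uvec j) * ucoord j 6.
Proof.
move=> hj; rewrite -!mulmx_e7 -mulmxA Rmat_vec !mxE uvecE // inordK // lformC.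
by rewrite -mulrA.
Qed.

(** * H lies in Gamma2, and K^6 and the reflections normalise H *)

Lemma inH_Gamma2 M : inH M -> Gamma2 M.
Proof.
elim=> {M} [M [j [hj [l [hl ->]]]]| | M N _ hM _ hN | M _ hM].
- have hlG := inK6_Gamma2 hl; apply: Gamma2_mul (inK6_Gamma2 (inK6_kmat j)).
  by do 2! apply: Gamma2_mul => //; exact: Gamma2_Rmat.
- exact: inK6_Gamma2 inK6_1.
- exact: Gamma2_mul.
- exact: Gamma2V.
Qed.

Lemma invmxM (R : comUnitRingType) n (A B : 'M[R]_n) :
  A \in unitmx -> B \in unitmx -> invmx (A *m B) = invmx B *m invmx A.
Proof.
move=> uA uB; apply: invmx_of_left.
by rewrite -mulmxA (mulmxA (invmx A)) mulVmx // mul1mx mulVmx.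
Qed.

Lemma invmx_conj (R : comUnitRingType) n (g M : 'M[R]_n) : g \in unitmx ->
  invmx (g *m M *m invmx g) = g *m invmx M *m invmx g.
Proof.
move=> ug; case uM: (M \in unitmx).
- by rewrite !invmxM ?unitmx_mul ?ug ?uM ?unitmx_inv // invmxK mulmxA.
- have nM : M \in [predC unitmx] by rewrite inE uM.
  have nC : g *m M *m invmx g \in [predC unitmx].
    by rewrite inE !unitmx_mul unitmx_inv ug uM.
  by rewrite (invmx_out nM) (invmx_out nC).
Qed.

Definition normalises_H (g : 'M[int]_7) : Prop :=
  g \in unitmx /\ forall M, inH M -> inH (g *m M *m invmx g).

Lemma normalises_H_mul a b : normalises_H a -> normalises_H b -> normalises_H (a *m b).
Proof.
move=> [ua ha] [ub hb]; split=> [|M hM]; first by rewrite unitmx_mul ua ub.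
rewrite invmxM //.
have -> : a *m b *m M *m (invmx b *m invmx a) = a *m (b *m M *m invmx b) *m invmx a.
  by rewrite !mulmxA.
exact/ha/hb.
Qed.

Lemma normalises_H_inH h : inH h -> normalises_H h.
Proof.
move=> hh; split=> [|M hM]; first exact/Gamma2_unit/inH_Gamma2.
by apply: inH_mul (inH_inv hh); exact: inH_mul.
Qed.

Lemma normalises_H_K6 m : inK6 m -> normalises_H m.
Proof.
move=> hm; have mm := inK6_sq hm.
have im : invmx m = m by exact: invmx_of_left.
have um : m \in unitmx by have [] := mulmx1_unit mm.
split=> //; rewrite im => M.
elim=> {M} [M [j [hj [l [hl ->]]]]| | M N _ hM _ hN | M _ hM].
- apply: inH_gen; exists j; split=> //; exists (m *m l); split; first exact: inK6_mul.
  rewrite !mulmxA -!(mulmxA _ _ m) (inK6C (inK6_kmat j) hm) !mulmxA.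
  by rewrite -!(mulmxA _ l m) (inK6C hl hm) !mulmxA.
- by rewrite mulmx1 mm; exact: inH_one.
- have -> : m *m (M *m N) *m m = (m *m M *m m) *m (m *m N *m m).
    by rewrite -!mulmxA (mulmxA m m) mm mul1mx !mulmxA.
  exact: inH_mul.
- by rewrite -{2}im -invmx_conj // im; exact: inH_inv.
Qed.

Lemma normalises_H_Rmat j : (7 <= j <= 27)%N -> normalises_H (Rmat j).
Proof.
move=> hj; have hk := inK6_kmat j.
have -> : Rmat j = (Rmat j *m kmat j) *m kmat j by rewrite -mulmxA inK6_sq // mulmx1.
apply: normalises_H_mul (normalises_H_K6 hk); apply/normalises_H_inH/inH_gen.
by exists j; split=> //; exists 1%:M; split; [exact: inK6_1 | rewrite mul1mx mulmx1].
Qed.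

Inductive KR_generated : 'M[int]_7 -> Prop :=
  | KR_one : KR_generated 1%:M
  | KR_mulK m g : inK6 m -> KR_generated g -> KR_generated (m *m g)
  | KR_mulR j g : (7 <= j <= 27)%N -> KR_generated g -> KR_generated (Rmat j *m g).

Lemma normalises_H_KR g : KR_generated g -> normalises_H g.
Proof.
elim=> {g} [| m g hm _ hg | j g hj _ hg].
- by rewrite -signdiag0; apply/normalises_H_K6/inK6_signdiag.
- exact/normalises_H_mul/hg/normalises_H_K6.
- exact/normalises_H_mul/hg/normalises_H_Rmat.
Qed.

(** * Integral points of the polytope on the orbit of e7 *)

Lemma odd_sqr_ge1 (x : int) : 1 <= (2 * x - 1) ^+ 2.
Proof. nia. Qed.

Lemma sum_sqr_dev (c0 c1 c2 c3 c4 c5 e : int) :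
  (c0 - e) ^+ 2 + (c1 - e) ^+ 2 + (c2 - e) ^+ 2 + (c3 - e) ^+ 2 + (c4 - e) ^+ 2 + (c5 - e) ^+ 2 =
  (c0 ^+ 2 + c1 ^+ 2 + c2 ^+ 2 + c3 ^+ 2 + c4 ^+ 2 + c5 ^+ 2 - (2 * e) ^+ 2)
  - e * (2 * c0 + 2 * c1 + 2 * c2 + 2 * c3 + 2 * c4 + 2 * c5 - 5 * (2 * e)).
Proof. ring. Qed.

(** A vector [c = (1 + 2 a0, 2 a1, ..., 2 a5, 2 e)] of norm 1 orthogonal to
    [(2,2,2,2,2,2,5)] would have [sum_i (c_i - e)^2 = 1] with [e] odd, whereas the five
    terms [i >= 1] are odd squares. *)
Lemma no_unit_orth_2225 (a0 a1 a2 a3 a4 a5 e : int) :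
  2 * (1 + 2 * a0) + 2 * (2 * a1) + 2 * (2 * a2) + 2 * (2 * a3) + 2 * (2 * a4)
    + 2 * (2 * a5) - 5 * (2 * e) = 0 ->
  (1 + 2 * a0) ^+ 2 + (2 * a1) ^+ 2 + (2 * a2) ^+ 2 + (2 * a3) ^+ 2 + (2 * a4) ^+ 2
    + (2 * a5) ^+ 2 - (2 * e) ^+ 2 = 1 -> False.
Proof.
move=> horth hnorm.
have := sum_sqr_dev (1 + 2 * a0) (2 * a1) (2 * a2) (2 * a3) (2 * a4) (2 * a5) e.
rewrite hnorm horth mulr0 subr0.
have [m he] : exists m, e = 1 + 2 * m by exists (a0 + a1 + a2 + a3 + a4 + a5 - 2 * e); lia.
have odd_dev a : 1 <= (2 * a - e) ^+ 2.
  by rewrite he (_ : 2 * a - (1 + 2 * m) = 2 * (a - m) - 1) ?odd_sqr_ge1 //; ring.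
have := sqr_ge0 (1 + 2 * a0 - e).
have := odd_dev a1; have := odd_dev a2; have := odd_dev a3; have := odd_dev a4; have := odd_dev a5.
move: ((1 + 2 * a0 - e) ^+ 2) ((2 * a1 - e) ^+ 2) ((2 * a2 - e) ^+ 2) ((2 * a3 - e) ^+ 2)
  ((2 * a4 - e) ^+ 2) ((2 * a5 - e) ^+ 2); lia.
Qed.

(** [a] is the largest weight, [b] and [c] the largest and smallest of the other five,
    [S1] and [Q] their sum and sum of squares. *)
Lemma extreme_weights_eq (a b c t S1 Q : int) :
  0 <= c -> c <= b -> b <= a -> a + b <= t -> a + S1 - c <= 2 * t + 1 ->
  Q <= (b + c) * S1 - 5 * b * c -> a ^+ 2 + Q = t ^+ 2 + t ->
  [/\ c = b, a = b & t = 2 * b].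
Proof.
move=> c0 cb ba hab hS hQ hsum.
have hF : t ^+ 2 + t <= a ^+ 2 + (b + c) * (2 * t + 1 + c - a) - 5 * b * c.
  have : (b + c) * S1 <= (b + c) * (2 * t + 1 + c - a) by apply: ler_wpM2l; lia.
  lia.
have idD : a ^+ 2 + (b + c) * (2 * t + 1 + c - a) - 5 * b * c - (t ^+ 2 + t) =
  (c - b) * (c + 1) - (t - 2 * b) * (t - 2 * c + 1) + (a - b) * (a - c) by ring.
have hab' : (a - b) * (a - c) <= (t - 2 * b) * (t - 2 * c) by apply: ler_pM; lia.
have hcb : (c - b) * (c + 1) <= 0 by apply: mulr_le0_ge0; lia.
have e1 : t - 2 * b = 0 by nia.
have /eqP : (c - b) * (c + 1) = 0 by nia.
rewrite mulf_eq0 => /orP [/eqP|/eqP] e2; split; lia.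
Qed.

Lemma sum_ord6_neq_const (k : 'I_6) (x : int) : \sum_(i < 6 | i != k) x = 5 * x.
Proof.
have h : \sum_(i < 6) x = x + \sum_(i < 6 | i != k) x by rewrite (bigD1 k).
rewrite sumr_const card_ord in h.
have <- : x *+ 6 - x = \sum_(i < 6 | i != k) x by rewrite h addrC addKr.
by rewrite -mulr_natl; lia.
Qed.

(** [2 w i] and [1 + 2 t] are the coordinates of a point [g e7] of P^6 with [g] in Gamma2:
    the hypotheses are the side inequalities of P^6 and [<g e7, g e7> = -1]. *)
Lemma bounded_weights_const (w : 'I_6 -> int) (t : int) :
  (forall i, 0 <= w i) ->
  (forall a b, a != b -> w a + w b <= t) ->
  (forall c, \sum_i w i - w c <= 2 * t + 1) ->
  \sum_i w i ^+ 2 = t ^+ 2 + t ->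
  exists2 b, (b = 0 \/ b = 1) & (forall i, w i = b) /\ t = 2 * b.
Proof.
move=> w0 hpair hfive hnorm.
have wabs i : Posz `|w i|%N = w i by rewrite gez0_abs.
have wle i j : (`|w i| <= `|w j|)%N -> w i <= w j by rewrite -(wabs i) -(wabs j) lez_nat.
case: (@arg_maxnP _ ord0 predT (fun i => `|w i|%N) isT) => k _ hk.
pose x1 : 'I_6 := if k == ord0 then inord 1 else ord0.
have hx1 : x1 != k.
  rewrite /x1; case: (eqVneq k ord0) => [->|hne]; last by rewrite eq_sym.
  by rewrite -(inj_eq val_inj) /= inordK.
case: (@arg_maxnP _ x1 [pred i | i != k] (fun i => `|w i|%N) hx1) => kb hkb hb.
case: (@arg_minnP _ x1 [pred i | i != k] (fun i => `|w i|%N) hx1) => kc hkc hc.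
set a := w k; set b := w kb; set c := w kc.
set S1 := \sum_(i < 6 | i != k) w i; set Q := \sum_(i < 6 | i != k) w i ^+ 2.
have tot : \sum_i w i = a + S1 by rewrite (bigD1 k).
have totQ : \sum_i w i ^+ 2 = a ^+ 2 + Q by rewrite (bigD1 k).
have quad : Q <= (b + c) * S1 - 5 * b * c.
  have : 0 <= \sum_(i < 6 | i != k) ((w i - c) * (b - w i)).
    apply: sumr_ge0 => i hi; by apply: mulr_ge0; rewrite subr_ge0; [exact: wle (hc _ hi) | exact: wle (hb _ hi)].
  have -> : \sum_(i < 6 | i != k) ((w i - c) * (b - w i)) =
      \sum_(i < 6 | i != k) ((b + c) * w i) - Q - \sum_(i < 6 | i != k) (b * c).
    by rewrite /Q -sumrB -sumrB; apply: eq_bigr => i _; ring.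
  by rewrite -mulr_sumr sum_ord6_neq_const -/S1; lia.
have [ecb eab et] : [/\ c = b, a = b & t = 2 * b].
  apply: (extreme_weights_eq (S1 := S1) (Q := Q)) => //.
  - exact: w0.
  - exact: wle (hc _ hkb).
  - exact: wle (hk _ isT).
  - by apply: hpair; rewrite eq_sym.
  - by have := hfive kc; rewrite tot.
  - by rewrite -totQ.
have wb i : w i = b.
  case: (eqVneq i k) => [->|hi]; first exact: eab.
  by have := wle _ _ (hb i hi); have := wle _ _ (hc i hi); rewrite -/c -/b; lia.
have S1E : S1 = 5 * b by rewrite /S1 (eq_bigr (fun _ => b)) ?sum_ord6_neq_const.
have := hfive kc; rewrite tot -/c ecb eab S1E => h5.
by exists b; [have := w0 kb; lia | split].
Qed.

Lemma Gamma2_col_lform g (i j : 'I_7) : Gamma2 g -> lform (col i g) (col j g) = J i j.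
Proof.
case=> hf _ _; rewrite -hf /lform !mxE; apply: eq_bigr => k _; rewrite !mxE.
by congr (_ * _); apply: eq_bigr => l _; rewrite !mxE.
Qed.

Lemma Gamma2_entry g A a b : g = 1%:M + 2%:Z *: A -> (a < 7)%N -> (b < 7)%N ->
  g (ord7 a) (ord7 b) = (a == b)%:R + 2 * A (ord7 a) (ord7 b).
Proof. by move=> -> ha hb; rewrite !mxE ord7_eq. Qed.

Lemma Gamma2_fix_e7_col g i : Gamma2 g ->
  (forall k, (k < 6)%N -> g (ord7 k) (ord7 6) = 0) -> g (ord7 6) (ord7 6) = 1 -> (i < 6)%N ->
  [/\ g (ord7 6) (ord7 i) = 0, forall k, (k < 6)%N -> k != i -> g (ord7 k) (ord7 i) = 0
    & g (ord7 i) (ord7 i) = 1 \/ g (ord7 i) (ord7 i) = -1].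
Proof.
move=> hg h6 g66 hi; have [_ _ [A eA]] := hg.
have i6 : (i == 6%N) = false by apply/eqP => ei; rewrite ei in hi.
have f1 := Gamma2_col_lform (ord7 i) (ord7 6) hg.
have f2 := Gamma2_col_lform (ord7 i) (ord7 i) hg.
have hi7 : (i < 7)%N by lia.
rewrite JmatE ?i6 //= in f1; rewrite JmatE ?i6 ?eqxx //= in f2.
rewrite !lformE !mxE g66 !h6 // in f1; rewrite !lformE !mxE in f2.
have e6 : g (ord7 6) (ord7 i) = 0 by lia.
move: f2; rewrite e6 mulr0 subr0 => f2; split=> //; clear f1 e6 i6 hi7.
- move=> k hk hki; rewrite (Gamma2_entry eA) //; move: f2; rewrite !(Gamma2_entry eA) //; try lia.
  by case: i hi hki => [|[|[|[|[|[|//]]]]]] _ /=;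
    case: k hk => [|[|[|[|[|[|//]]]]]] _ //= _; rewrite ?mulr1n ?mulr0n; nia.
- rewrite (Gamma2_entry eA) //; move: f2; rewrite !(Gamma2_entry eA) //; try lia.
  by case: i hi => [|[|[|[|[|[|//]]]]]] _ /=; rewrite ?mulr1n ?mulr0n; nia.
Qed.

Lemma Gamma2_fix_e7_K6 g : Gamma2 g ->
  (forall k, (k < 6)%N -> g (ord7 k) (ord7 6) = 0) -> g (ord7 6) (ord7 6) = 1 -> inK6 g.
Proof.
move=> hg h6 g66.
pose p k := (k != 7%N) && (g (ord7 k.-1) (ord7 k.-1) < 0).
suff -> : g = signdiag p by apply: inK6_signdiag.
apply/matrixP => i j; rewrite -[i]inord_val -[j]inord_val signdiagE.
move: (ltn_ord i) (ltn_ord j); move: (nat_of_ord i) (nat_of_ord j) => a b ha hb.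
rewrite ord7_eq // inordK //.
case: (eqVneq a b) => [<-|hab].
- rewrite mulr1n /p /=; case: (ltnP a 6) => ha6.
  + have [_ _ h] := Gamma2_fix_e7_col hg h6 g66 ha6.
    rewrite (_ : (a.+1 != 7%N) = true); last by apply/eqP => e; lia.
    by case: h => ->.
  + by have -> : a = 6%N by lia; rewrite g66.
- rewrite mulr0n; case: (ltnP b 6) => hb6.
  + have [e1 e2 _] := Gamma2_fix_e7_col hg h6 g66 hb6.
    case: (ltnP a 6) => ha6; first exact: e2.
    by have -> : a = 6%N by lia.
  + have -> : b = 6%N by lia.
    by apply: h6; lia.
Qed.

Lemma Gamma2_col_2225 g : Gamma2 g ->
  (forall k, (k < 6)%N -> g (ord7 k) (ord7 6) = 2) -> g (ord7 6) (ord7 6) = 5 -> False.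
Proof.
move=> hg h6 g66; have [_ _ [A eA]] := hg.
have f1 := Gamma2_col_lform (ord7 0) (ord7 6) hg.
have f2 := Gamma2_col_lform (ord7 0) (ord7 0) hg.
rewrite JmatE // in f1; rewrite JmatE // in f2.
rewrite !lformE !mxE g66 !h6 // in f1; rewrite !lformE !mxE in f2.
move: f1 f2; rewrite !(Gamma2_entry eA) //= ?mulr1n ?mulr0n ?add0r => f1 f2.
apply: (@no_unit_orth_2225 (A (ord7 0) (ord7 0)) (A (ord7 1) (ord7 0)) (A (ord7 2) (ord7 0))
  (A (ord7 3) (ord7 0)) (A (ord7 4) (ord7 0)) (A (ord7 5) (ord7 0)) (A (ord7 6) (ord7 0))).
- by rewrite -[RHS]f1; ring.
- by rewrite -[RHS]f2; ring.
Qed.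

Ltac root_ineq hroots eA H j :=
  have H := hroots j isT; rewrite lform_uvec // !mulmx_e7 !(Gamma2_entry eA) //=
    ?mulr1n ?mulr0n ?add0r /ucoord /= in H.

(** By [bounded_weights_const], [g e7] is either [e7] or [(2,...,2,5)], and the latter
    is excluded by [Gamma2_col_2225]. *)
Lemma Gamma2_P_K6 g : Gamma2 g ->
  (forall k, (k < 6)%N -> 0 <= g (ord7 k) (ord7 6)) ->
  (forall j, (7 <= j <= 27)%N -> lform (g *m e7 int) (uvec j) <= 0) -> inK6 g.
Proof.
move=> hg hnn hroots; have [_ _ [A eA]] := hg.
have [hN _] := Gamma2_future hg.
rewrite lformE !mulmx_e7 !(Gamma2_entry eA) //= ?mulr1n ?mulr0n ?add0r in hN.
root_ineq hroots eA H7 7%N. root_ineq hroots eA H8 8%N. root_ineq hroots eA H9 9%N.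
root_ineq hroots eA H10 10%N. root_ineq hroots eA H11 11%N. root_ineq hroots eA H12 12%N.
root_ineq hroots eA H13 13%N. root_ineq hroots eA H14 14%N. root_ineq hroots eA H15 15%N.
root_ineq hroots eA H16 16%N. root_ineq hroots eA H17 17%N. root_ineq hroots eA H18 18%N.
root_ineq hroots eA H19 19%N. root_ineq hroots eA H20 20%N. root_ineq hroots eA H21 21%N.
root_ineq hroots eA H22 22%N. root_ineq hroots eA H23 23%N. root_ineq hroots eA H24 24%N.
root_ineq hroots eA H25 25%N. root_ineq hroots eA H26 26%N. root_ineq hroots eA H27 27%N.
have [b hb [hall ht]] : exists2 b, (b = 0 \/ b = 1) &
    (forall i : 'I_6, A (ord7 i) (ord7 6) = b) /\ A (ord7 6) (ord7 6) = 2 * b.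
  apply: bounded_weights_const.
  - move=> i; have := ltn_ord i; have := hnn i (ltn_ord i) => + i6.
    rewrite (Gamma2_entry eA) //; last by lia.
    by rewrite (_ : ((i : nat) == 6%N) = false) ?mulr0n ?add0r; [lia | apply/eqP; lia].
  - by clear hN; move=> [[|[|[|[|[|[|//]]]]]] ha] [[|[|[|[|[|[|//]]]]]] hb] //= _; lia.
  - clear hN; move=> c; rewrite sum_ord6 !inordK //.
    by case: c => [[|[|[|[|[|[|//]]]]]] hc] /=; lia.
  - rewrite sum_ord6 !inordK // !expr2.
    apply/eqP; rewrite -subr_eq0; apply/eqP; apply: (@mulfI _ (4:int)) => //.
    by rewrite mulr0 -[RHS](subrr (-1)) -{1}hN; ring.
have hcol k : (k < 6)%N -> g (ord7 k) (ord7 6) = 2 * b.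
  move=> hk; rewrite (Gamma2_entry eA) //; last by lia.
  rewrite (_ : (k == 6%N) = false); last by apply/eqP; lia.
  by rewrite mulr0n add0r (hall (Ordinal hk)).
have h66 : g (ord7 6) (ord7 6) = 1 + 2 * (2 * b) by rewrite (Gamma2_entry eA) // ht.
case: hb => eb; rewrite eb in hcol h66.
- by apply: Gamma2_fix_e7_K6 => // k hk; rewrite hcol.
- by case: (Gamma2_col_2225 hg) => // k hk; rewrite hcol.
Qed.

(** * Gamma2 is generated by K^6 and the reflections R_7, ..., R_27 *)

Lemma sign_normalise g : Gamma2 g -> exists2 m, inK6 m &
  [/\ Gamma2 (m *m g), forall k, (k < 6)%N -> 0 <= (m *m g) (ord7 k) (ord7 6)
    & (m *m g) (ord7 6) (ord7 6) = g (ord7 6) (ord7 6)].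
Proof.
move=> hg; pose p k := (k != 7%N) && (g (ord7 k.-1) (ord7 6) < 0).
have hm : inK6 (signdiag p) by apply: inK6_signdiag.
have mgE k j : (k < 7)%N ->
    (signdiag p *m g) (ord7 k) j = (if p k.+1 then -1 else 1) * g (ord7 k) j.
  by move=> hk; rewrite /signdiag mul_diag_mx !mxE inordK.
exists (signdiag p) => //; split.
- exact: Gamma2_mul (inK6_Gamma2 hm) hg.
- move=> k hk; rewrite mgE /p /=; last by lia.
  rewrite (_ : (k.+1 != 7%N) = true) /=; last by apply/eqP; lia.
  by case: ifP => h; rewrite ?mulN1r ?mul1r; move: h; lia.
- by rewrite mgE // /p /= mul1r.
Qed.

Lemma Rmat_descent g j : Gamma2 g -> (7 <= j <= 27)%N ->
  0 < lform (g *m e7 int) (uvec j) ->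
  Gamma2 (Rmat j *m g) /\ (Rmat j *m g) (ord7 6) (ord7 6) < g (ord7 6) (ord7 6).
Proof.
move=> hg hj hpos; split; first exact: Gamma2_mul (Gamma2_Rmat hj) hg.
rewrite Rmat_corner // ltrBlDr ltrDl.
by apply: mulr_gt0 (ucoord6_gt0 hj); apply: mulr_gt0.
Qed.

Lemma Gamma2_KR_generated g : Gamma2 g -> KR_generated g.
Proof.
have [n] := ubnP `|g (ord7 6) (ord7 6)|%N; elim: n g => // n IH g hn hg.
have [m hm [hg1 hnn h66]] := sign_normalise hg.
have -> : g = m *m (m *m g) by rewrite mulmxA inK6_sq // mul1mx.
apply: KR_mulK => //.
case: (boolP [exists j : 'I_28, (7 <= j)%N && (0 < lform (m *m g *m e7 int) (uvec j))]).
- case/existsP => j /andP [j7 hpos]; have hj : (7 <= j <= 27)%N.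
    by rewrite j7 /=; have := ltn_ord j; lia.
  have [hg2 lt2] := Rmat_descent hg1 hj hpos.
  have -> : m *m g = Rmat j *m (Rmat j *m (m *m g)) by rewrite mulmxA Rmat_sq // mul1mx.
  apply: KR_mulR => //; apply: (IH _ _ hg2).
  have [_ p2 _] := hg2; have [_ p0 _] := hg.
  move: hn; rewrite -!ltz_nat !gez0_abs ?ltW //; move: lt2; rewrite h66.
  move: (_ (ord7 6) (ord7 6)) (g _ _) => x y; lia.
- move=> /existsPn hno; rewrite -[m *m g]mulmx1; apply: KR_mulK; last exact: KR_one.
  apply: Gamma2_P_K6 => // j hj; have j28 : (j < 28)%N by lia.
  by move: (hno (Ordinal j28)); rewrite /= (_ : (7 <= j)%N = true) ?leNgt //; lia.
Qed.

Theorem lemma8p1 (R : realType) : normal_in (@inGamma6_2 R) inH.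
Proof.
split=> [M /inH_Gamma2 /(Gamma2P R) // | g M /(Gamma2P R) hg hM].
by have [_] := normalises_H_KR (Gamma2_KR_generated hg); apply.
Qed.
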